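(* Every compact topological manifold of dimension at least $2$ does not have the $\omega$-FTP property.
   Context: For continuous $f:X\to X$ and $x\in X$, $\omega_f(x)=\{y:\ \exists\, n_i\to+\infty,\ f^{n_i}(x)\to y\}$, which is totally periodic if all its points are periodic for $f$. A compact metric space $X$ has the $\omega$-FTP property if for every continuous $f:X\to X$, every totally periodic $\omega$-limit set of $f$ is finite. *)

From HB Require Import structures.
From mathcomp Require Import all_boot all_order all_algebra.
From mathcomp Require Import all_classical all_reals all_analysis.
Set Implicit Arguments. Unset Strict Implicit. Unset Printing Implicit Defensive.
Import Order.TTheory GRing.Theory Num.Theory.
Import numFieldNormedType.Exports.
Local Open Scope classical_set_scope.
Local Open Scope ring_scope.

Definition omega_limit {T : topologicalType} (f : T -> T) (x : T) : set T :=
  [set y | exists n : nat -> nat,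
      (forall N : nat, \forall i \near \oo, (N <= n i)%N) /\
      ((fun i => iter (n i) f x) @ \oo --> y)].

Definition periodic_point {T : Type} (f : T -> T) (y : T) : Prop :=
  exists p : nat, (0 < p)%N /\ iter p f y = y.

Definition totally_periodic {T : Type} (f : T -> T) (A : set T) : Prop :=
  forall y, A y -> periodic_point f y.

Definition omega_FTP (T : topologicalType) : Prop :=
  forall f : T -> T, continuous f ->
  forall x : T, totally_periodic f (omega_limit f x) ->
  finite_set (omega_limit f x).

Definition locally_euclidean (R : realType) (T : topologicalType) (n : nat)
  : Prop :=
  forall x : T, exists (U : set T) (phi : T -> 'rV[R]_n) (psi : 'rV[R]_n -> T),
    [/\ open U, U x,
        {within U, continuous phi}, continuous psi &
        [/\ (forall v, U (psi v)),
             (forall y, U y -> psi (phi y) = y) &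
             (forall v, phi (psi v) = v)]].

Definition compact_manifold (R : realType) (T : topologicalType) (n : nat)
  : Prop :=
  [/\ hausdorff_space T, compact [set: T] & locally_euclidean R T n].

From HB Require Import structures.
From mathcomp Require Import all_boot all_order all_algebra.
From mathcomp Require Import all_classical all_reals all_analysis.
From mathcomp Require Import ring lra.
Set Implicit Arguments. Unset Strict Implicit. Unset Printing Implicit Defensive.
Import Order.TTheory GRing.Theory Num.Theory.
Import numFieldNormedType.Exports.
Local Open Scope classical_set_scope.
Local Open Scope ring_scope.

(* Take a chart of the manifold and polar coordinates (r, t) in the plane of two
   coordinate axes of R^n.  The map [spiral] turns each point by the angle
   [tent r], which vanishes unless 1 < r < 3, and rescales its radius by [gain];
   it is the identity off a compact set, so it extends by the identity to a
   continuous self-map of the manifold.  The orbit of the point at radius 2 and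
   angle 0 has radii 1 + 1/(k+1) and angles the partial sums of the harmonic
   series: the radii tend to 1 while the angle tends to infinity in steps tending
   to 0.  Hence the omega-limit set is the whole unit circle of the plane, which
   consists of fixed points: it is totally periodic but infinite. *)

Lemma infinite_set_injective (T : Type) (A : set T) (g : nat -> T) :
  injective g -> (forall m, A (g m)) -> infinite_set A.
Proof.
move=> ginj Ag finA; apply: infinite_nat.
suff <- : g @^-1` A = [set: nat] by exact: finite_preimage (in2W ginj) finA.
by apply/seteqP; split=> // m _; exact: Ag.
Qed.

Lemma compact_norm_le (R : realType) (n : nat) (e : R) :
  compact [set z : 'rV[R]_n | `|z| <= e].
Proof.
apply: bounded_closed_compact.
  exists e; split; first exact: num_real.
  by move=> M eM z /= ze; exact: le_trans ze (ltW eM).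
have := (continuous_closedP (Num.norm : 'rV[R]_n -> R)).1 norm_continuous _ (@closed_le R e).
exact.
Qed.

Lemma exists_term_near (R : realFieldType) (u : R^nat) (m : nat) (eps T : R) :
  u @ \oo --> +oo -> 0 <= eps -> u m <= T ->
  (forall k, (m <= k)%N -> u k.+1 - u k <= eps) ->
  exists2 k, (m <= k)%N & T <= u k <= T + eps.
Proof.
move=> /cvgryPge/(_ T) [N _ uN] eps0 umT step.
have ex : exists k, (m <= k)%N && (T <= u k).
  by exists (maxn m N); rewrite leq_maxl uN //= leq_maxr.
case: (ex_minnP ex) => k /andP[mk Tuk] kmin; exists k => //; rewrite Tuk /=.
case: k => [|k] in mk Tuk kmin *.
  by move: mk; rewrite leqn0 => /eqP m0; subst m; lra.
have [mk'|km] := leqP m k; last first.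
  have mE : m = k.+1 by apply/eqP; rewrite eqn_leq mk km.
  by subst m; lra.
have ukT : u k < T.
  by rewrite ltNge; apply/negP => Tuk'; have := kmin k; rewrite mk' Tuk' ltnn => /(_ isT).
by have := step k mk'; lra.
Qed.

Section HarmonicSums.
Variable R : realType.
Local Notation H := (series (@harmonic R)).

Lemma harmonic_le1 k : harmonic k <= 1 :> R.
Proof. by rewrite /= invr_le1 ?ler1n ?unitfE ?pnatr_eq0. Qed.

Lemma harmonic_nonincreasing i k : (i <= k)%N -> harmonic k <= harmonic i :> R.
Proof. by move=> ik; rewrite /= lef_pV2 ?posrE ?ltr0n // ler_nat ltnS. Qed.

Lemma series_harmonic_le k : H k <= k%:R.
Proof.
elim: k => [|k IH]; first by rewrite /series /= big_geq.
by rewrite seriesSr -natr1 lerD // harmonic_le1.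
Qed.

Lemma series_harmonic_cvgy : H @ \oo --> +oo.
Proof.
apply: nondecreasing_dvgn_lt; last exact: dvg_harmonic.
apply/nondecreasing_seqP => k; rewrite seriesSr lerDl; exact: harmonic_ge0.
Qed.

Lemma series_harmonic_mod_cvg (p al : R) : 1 <= p -> 0 <= al ->
  exists2 g : nat -> nat, (forall i, (i <= g i)%N) &
    (fun i => H (g i) - p *+ i) @ \oo --> al.
Proof.
move=> p1 al0.
have near_al i : exists k, (i <= k)%N /\ al + p *+ i <= H k <= al + p *+ i + harmonic i.
  suff [k ik Hk] : exists2 k, (i <= k)%N & al + p *+ i <= H k <= al + p *+ i + harmonic i.
    by exists k.
  apply: exists_term_near; rewrite ?harmonic_ge0 //.
  - exact: series_harmonic_cvgy.
  - apply: (le_trans (series_harmonic_le i)); rewrite -mulr_natr.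
    have : 0 <= i%:R :> R by []; nra.
  - by move=> k ik; rewrite seriesSB harmonic_nonincreasing.
have [g gP] := choice near_al.
exists g => [i|]; first by case: (gP i).
apply: (@squeeze_cvgr _ _ _ _ (fun=> al) (fun i => al + harmonic i)).
- by apply: nearW => i; have [_ /andP[lo hi]] := gP i; apply/andP; split; lra.
- exact: cvg_cst.
- by rewrite -[X in _ --> X]addr0; apply: cvgD; [exact: cvg_cst|exact: cvg_harmonic].
Qed.
End HarmonicSums.

Section Spiral.
Variables (R : realType) (n : nat) (i0 i1 : 'I_n).
Hypothesis i01 : i0 != i1.
Local Notation vec := 'rV[R]_n.
Local Notation e0 := (delta_mx ord0 i0 : vec).
Local Notation e1 := (delta_mx ord0 i1 : vec).

Definition xcoord (z : vec) : R := z ord0 i0.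
Definition ycoord (z : vec) : R := z ord0 i1.
Definition planar (a b : R) : vec := a *: e0 + b *: e1.
Definition polar (r t : R) : vec := planar (r * cos t) (r * sin t).

(* The off-plane term keeps the support of [spiral] bounded in all of 'rV_n. *)
Definition radius (z : vec) : R :=
  Num.sqrt (xcoord z ^+ 2 + ycoord z ^+ 2) + `|z - planar (xcoord z) (ycoord z)|.

Definition tent (r : R) : R := Num.max 0 (Num.min (r - 1) (3 - r)).

(* [gain u * (1 + u) = 1 + u / (1 + u)] sends the radius [1 + 1/(k+1)] to
   [1 + 1/(k+2)] when [u = 1/(k+1)]. *)
Definition gain (u : R) : R := (1 + 2 * u) / (1 + u) ^+ 2.

Definition twist (z : vec) : R := tent (radius z).

Definition spiral (z : vec) : vec :=
  let u := twist z in let a := xcoord z in let b := ycoord z in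
  z - planar a b + planar (gain u * (cos u * a - sin u * b))
                          (gain u * (sin u * a + cos u * b)).

Lemma xcoord_planar a b : xcoord (planar a b) = a.
Proof. by rewrite /xcoord !mxE !eqxx (negbTE i01) mulr1 mulr0 addr0. Qed.

Lemma ycoord_planar a b : ycoord (planar a b) = b.
Proof. by rewrite /ycoord !mxE !eqxx eq_sym (negbTE i01) mulr1 mulr0 add0r. Qed.

Lemma radius_polar r t : 0 <= r -> radius (polar r t) = r.
Proof.
move=> r0; rewrite /radius /polar xcoord_planar ycoord_planar subrr normr0 addr0.
by rewrite !exprMn -mulrDr cos2Dsin2 mulr1 sqrtr_sqr ger0_norm.
Qed.

Lemma spiral_polar r t : 0 <= r ->
  spiral (polar r t) = polar (gain (tent r) * r) (t + tent r).
Proof.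
move=> r0; rewrite /spiral /twist radius_polar // /polar xcoord_planar ycoord_planar subrr add0r.
by rewrite cosD sinD; congr planar; ring.
Qed.

Lemma spiral_id z : twist z = 0 -> spiral z = z.
Proof.
have gain0 : gain 0 = 1 by rewrite /gain mulr0 addr0 expr1n divr1.
move=> u0; rewrite /spiral u0 cos0 sin0 gain0.
by rewrite !(mul1r, mul0r, subr0, add0r) subrK.
Qed.

Lemma tent_eq0 r : 3 <= r -> tent r = 0.
Proof. by move=> r3; apply/max_idPl; rewrite ge_min; apply/orP; right; lra. Qed.

Lemma tent1 : tent 1 = 0.
Proof. by apply/max_idPl; rewrite ge_min subrr lexx. Qed.

Lemma norm_le_radius z : `|z| <= radius z * (1 + `|e0| + `|e1|).
Proof.
have le_sqrt (c c' : R) : `|c| <= Num.sqrt (c ^+ 2 + c' ^+ 2).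
  by rewrite -sqrtr_sqr ler_sqrt ?lerDl ?addr_ge0 ?sqr_ge0.
have ha := le_sqrt (xcoord z) (ycoord z).
have hb := le_sqrt (ycoord z) (xcoord z); rewrite addrC in hb.
rewrite /radius; move: ha hb; set s := Num.sqrt _; set d := z - _ => ha hb.
have -> : z = d + planar (xcoord z) (ycoord z) by rewrite subrK.
rewrite (le_trans (ler_normD _ _)) // (le_trans (lerD (lexx _) (ler_normD _ _))) //.
rewrite !normrZ; have := ler_wpM2r (normr_ge0 e0) ha; have := ler_wpM2r (normr_ge0 e1) hb.
have := mulr_ge0 (normr_ge0 d) (normr_ge0 e0); have := mulr_ge0 (normr_ge0 d) (normr_ge0 e1).
have := sqrtr_ge0 (xcoord z ^+ 2 + ycoord z ^+ 2); rewrite -/s; nra.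
Qed.

Lemma planar_continuous (T : topologicalType) (a b : T -> R) :
  continuous a -> continuous b -> continuous (fun x => planar (a x) (b x)).
Proof.
by move=> ca cb x; apply: cvgD; apply: cvgZ; [exact: ca|exact: cvg_cst|exact: cb|exact: cvg_cst].
Qed.

Lemma radius_continuous : continuous radius.
Proof.
have cx : continuous xcoord by exact: coord_continuous.
have cy : continuous ycoord by exact: coord_continuous.
move=> z; apply: (@cvgD _ _ _ (nbhs z)); last first.
  apply: (@cvg_norm _ _ _ (nbhs z)); apply: (@cvgB _ _ _ (nbhs z)); first exact: cvg_id.
  exact: (planar_continuous cx cy).
apply: (continuous_comp (f := fun z => xcoord z ^+ 2 + ycoord z ^+ 2)).
  by apply: (@cvgD _ _ _ (nbhs z)); apply: (@cvgM _ _ (nbhs z)); (exact: cx || exact: cy).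
exact: sqrt_continuous.
Qed.

Lemma tent_continuous : continuous tent.
Proof.
move=> r; apply: (@continuous_max R R (cst 0) (fun r => Num.min (r - 1) (3 - r))).
  exact: cvg_cst.
apply: (@continuous_min R R (fun r => r - 1) (fun r => 3 - r));
  by apply: (@cvgB _ _ _ (nbhs r)); (exact: cvg_id || exact: cvg_cst).
Qed.

Lemma tent_ge0 r : 0 <= tent r.
Proof. by rewrite le_max lexx. Qed.

Lemma gain_continuous u : 0 <= u -> {for u, continuous gain}.
Proof.
move=> u0; apply: (@cvgM _ _ (nbhs u)).
  by apply: (@cvgD _ _ _ (nbhs u)); [exact: cvg_cst|apply: cvgM; [exact: cvg_cst|exact: cvg_id]].
apply: (@cvgV _ _ (nbhs u)); first by rewrite expf_eq0 /= gt_eqF // ltr_pwDl.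
by apply: (@cvgM _ _ (nbhs u)); apply: (@cvgD _ _ _ (nbhs u)); (exact: cvg_cst || exact: cvg_id).
Qed.

Lemma spiral_continuous : continuous spiral.
Proof.
have cx : continuous xcoord by exact: coord_continuous.
have cy : continuous ycoord by exact: coord_continuous.
have cu : continuous twist.
  by move=> z; exact: (continuous_comp (@radius_continuous z) (@tent_continuous _)).
have cg : continuous (gain \o twist).
  by move=> z; apply: continuous_comp; [exact: cu|exact/gain_continuous/tent_ge0].
have cc : continuous (cos \o twist).
  by move=> z; apply: continuous_comp; [exact: cu|exact: continuous_cos].
have cs : continuous (sin \o twist).
  by move=> z; apply: continuous_comp; [exact: cu|exact: continuous_sin].
have cA : continuous (fun z => gain (twist z) * (cos (twist z) * xcoord z - sin (twist z) * ycoord z)).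
  move=> z; apply: (@cvgM _ _ (nbhs z)); first exact: cg.
  by apply: (@cvgB _ _ _ (nbhs z)); apply: (@cvgM _ _ (nbhs z));
    (exact: cc || exact: cs || exact: cx || exact: cy).
have cB : continuous (fun z => gain (twist z) * (sin (twist z) * xcoord z + cos (twist z) * ycoord z)).
  move=> z; apply: (@cvgM _ _ (nbhs z)); first exact: cg.
  by apply: (@cvgD _ _ _ (nbhs z)); apply: (@cvgM _ _ (nbhs z));
    (exact: cc || exact: cs || exact: cx || exact: cy).
move=> z; apply: (@cvgD _ _ _ (nbhs z)); last exact: (planar_continuous cA cB).
by apply: (@cvgB _ _ _ (nbhs z)); [exact: cvg_id|exact: (planar_continuous cx cy)].
Qed.

Definition spiral_bound : R := 3 * (1 + `|e0| + `|e1|).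

Lemma spiral_support z : spiral z != z -> `|z| <= spiral_bound.
Proof.
apply: contraNT; rewrite -ltNge => big; apply/eqP/spiral_id/tent_eq0.
have pos : 0 < 1 + `|e0| + `|e1|.
  by have := normr_ge0 e0; have := normr_ge0 e1; lra.
by rewrite -(ler_pM2r pos) ltW // (lt_le_trans big) // norm_le_radius.
Qed.

Definition spiral_orbit (k : nat) : vec :=
  polar (1 + harmonic k) (series harmonic k).

Lemma tent_harmonic k : tent (1 + harmonic k) = harmonic k.
Proof.
have h0 := @harmonic_ge0 R k; have h1 := harmonic_le1 R k.
rewrite /tent addrAC subrr add0r; move: h0 h1; set q := harmonic k => h0 h1.
have -> : Num.min q (3 - (1 + q)) = q by apply/min_idPl; lra.
exact/max_idPr.
Qed.

Lemma gain_harmonic k : gain (harmonic k) * (1 + harmonic k) = 1 + harmonic k.+1.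
Proof.
by rewrite /gain /= [k.+2%:R]mulrS; field; rewrite !nat1r !pnatr_eq0.
Qed.

Lemma iter_spiral k : iter k spiral (spiral_orbit 0) = spiral_orbit k.
Proof.
elim: k => [//|k IH]; rewrite iterS IH /spiral_orbit spiral_polar; last first.
  by rewrite addr_ge0 ?harmonic_ge0.
by rewrite tent_harmonic gain_harmonic seriesSr.
Qed.

Lemma norm_spiral_orbit k : `|spiral_orbit k| <= spiral_bound.
Proof.
have h1 := harmonic_le1 R k.
rewrite (le_trans (norm_le_radius _)) // radius_polar ?addr_ge0 ?harmonic_ge0 //.
rewrite ler_pM2r; first lra.
by have := normr_ge0 e0; have := normr_ge0 e1; lra.
Qed.

Lemma polar_harmonic_inj : injective (fun m => polar 1 (harmonic m)).
Proof.
have in_0pi m : (harmonic m : R) \in `[0, pi].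
  rewrite in_itv /= harmonic_ge0 (le_trans (harmonic_le1 _ _)) //.
  by have := @pi_ge2 R; lra.
move=> a b /(congr1 xcoord); rewrite /polar !xcoord_planar !mul1r.
by move=> /(cos_inj (in_0pi a) (in_0pi b)) /invr_inj /eqP; rewrite eqr_nat => /eqP [].
Qed.

Lemma polar_cvg (T : Type) (F : set_system T) (FF : Filter F) (r t : T -> R) r0 t0 :
  r @ F --> r0 -> t @ F --> t0 -> (fun x => polar (r x) (t x)) @ F --> polar r0 t0.
Proof.
move=> rr tt; apply: cvgD; apply: cvgZ; try exact: cvg_cst; apply: cvgM => //.
  exact: (cvg_comp _ _ tt (@continuous_cos R t0)).
exact: (cvg_comp _ _ tt (@continuous_sin R t0)).
Qed.

Lemma polar_periodic r t i : polar r (t + pi *+ 2 *+ i) = polar r t.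
Proof. by rewrite /polar (periodicn (@cosD2pi R)) (periodicn (@sinD2pi R)). Qed.

Lemma omega_limit_spiral_fixed w :
  omega_limit spiral (spiral_orbit 0) w -> spiral w = w.
Proof.
case=> m [/cvgnyPge m_oo]; rewrite (_ : (fun i => _) = spiral_orbit \o m); last first.
  by apply/funext => i; rewrite /= iter_spiral.
move=> mw; apply: spiral_id; rewrite /twist.
suff -> : radius w = 1 by exact: tent1.
have r_lim := cvg_comp _ _ mw (@radius_continuous w).
have r_one : (radius \o (spiral_orbit \o m)) @ \oo --> (1 : R).
  rewrite (_ : _ \o _ = fun i => 1 + harmonic (m i)); last first.
    by apply/funext => i; rewrite /= radius_polar // addr_ge0 ?harmonic_ge0.
  rewrite -[X in _ --> X]addr0; apply: cvgD; first exact: cvg_cst.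
  exact: (cvg_comp _ _ m_oo cvg_harmonic).
by apply: (cvg_unique _ r_lim r_one).
Qed.

Lemma omega_limit_spiral_circle al : 0 <= al ->
  omega_limit spiral (spiral_orbit 0) (polar 1 al).
Proof.
move=> al0; have p1 : 1 <= pi *+ 2 :> R by have := @pi_ge2 R; rewrite mulr2n; lra.
have [g gi gP] := series_harmonic_mod_cvg p1 al0.
have g_oo : g @ \oo --> \oo.
  by apply/cvgnyPge => N; exists N => // i /= Ni; exact: leq_trans Ni (gi i).
exists g; split; first exact/cvgnyPge.
rewrite (_ : (fun i => _) = fun i =>
    polar (1 + harmonic (g i)) (series harmonic (g i) - pi *+ 2 *+ i)); last first.
  by apply/funext => i; rewrite iter_spiral -(polar_periodic _ _ i) subrK.
apply: polar_cvg gP; rewrite -[X in _ --> X]addr0; apply: cvgD; first exact: cvg_cst.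
exact: (cvg_comp _ _ g_oo cvg_harmonic).
Qed.
End Spiral.

Section ChartExtension.
Variables (R : realType) (n : nat) (T : topologicalType) (U : set T).
Variables (phi : T -> 'rV[R]_n) (psi : 'rV[R]_n -> T) (f : 'rV[R]_n -> 'rV[R]_n).
Hypotheses (psiU : forall v, U (psi v)) (phiK : forall v, phi (psi v) = v).

Definition chart_extension (y : T) : T :=
  if pselect (U y) then psi (f (phi y)) else y.

Lemma chart_extensionE y : U y -> chart_extension y = psi (f (phi y)).
Proof. by rewrite /chart_extension; case: pselect. Qed.

Lemma chart_extension_psi v : chart_extension (psi v) = psi (f v).
Proof. by rewrite chart_extensionE ?phiK. Qed.

Lemma iter_chart_extension k v : iter k chart_extension (psi v) = psi (iter k f v).
Proof. by elim: k => [//|k IH]; rewrite !iterS IH chart_extension_psi. Qed.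

Lemma omega_limit_chart_extension_psi v w : continuous psi ->
  omega_limit f v w -> omega_limit chart_extension (psi v) (psi w).
Proof.
move=> psi_cont [m [m_oo mw]]; exists m; split => //.
under eq_fun do rewrite iter_chart_extension.
exact: (cvg_comp _ _ mw (@psi_cont w)).
Qed.

Hypotheses (psiK : forall y, U y -> psi (phi y) = y) (oU : open U).
Hypotheses (phi_cont : {within U, continuous phi}) (psi_cont : continuous psi).
Hypothesis T_hausdorff : hausdorff_space T.
Variable K : set 'rV[R]_n.
Hypothesis K_compact : compact K.

Let phi_cont_in : {in U, continuous phi}.
Proof. by rewrite -continuous_open_subspace. Qed.

Let psiK_closed : closed (psi @` K).
Proof.
apply: compact_closed => //; apply: continuous_compact => //.
exact: continuous_subspaceT.
Qed.

Lemma chart_extension_continuous :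
  continuous f -> (forall v, f v != v -> K v) -> continuous chart_extension.
Proof.
move=> f_cont f_supp y; have [Uy|nUy] := pselect (U y).
  have near_y : \forall z \near y, psi (f (phi z)) = chart_extension z.
    by apply: filterS (open_nbhs_nbhs (conj oU Uy)) => z /chart_extensionE ->.
  rewrite /continuous_at (chart_extensionE Uy); apply: cvg_trans (near_eq_cvg near_y) _.
  apply: continuous_comp; last exact: psi_cont.
  by apply: continuous_comp; [exact: phi_cont_in (mem_set Uy)|exact: f_cont].
have fixed_off : forall z, ~ (psi @` K) z -> chart_extension z = z.
  move=> z nKz; rewrite /chart_extension; case: pselect => // Uz.
  have [fz|fz] := eqVneq (f (phi z)) (phi z); first by rewrite fz psiK.
  by case: nKz; exists (phi z); [exact: f_supp|exact: psiK].
have nKy : ~ (psi @` K) y by move=> [v _ vy]; apply: nUy; rewrite -vy.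
have near_y : \forall z \near y, z = chart_extension z.
  have nbhs_y : open_nbhs y (~` (psi @` K)) by split; [exact: closed_openC|].
  by apply: filterS (open_nbhs_nbhs nbhs_y) => z /fixed_off ->.
rewrite /continuous_at fixed_off //.
exact: cvg_trans (near_eq_cvg near_y) (cvg_id).
Qed.

Lemma omega_limit_chart_extension v y : (forall k, K (iter k f v)) ->
  omega_limit chart_extension (psi v) y -> exists2 w, omega_limit f v w & y = psi w.
Proof.
move=> K_orbit [m [m_oo my]]; move: my; under eq_fun do rewrite iter_chart_extension.
move=> my; have [w Kw wy] : (psi @` K) y.
  by apply: closed_cvg my => //; apply: nearW => i; exists (iter (m i) f v).
exists w => //; subst y; exists m; split => //.
have := cvg_comp _ _ my (phi_cont_in (mem_set (psiU w))); rewrite phiK.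
apply: cvg_trans; apply: near_eq_cvg; apply: nearW => i /=.
by rewrite phiK.
Qed.
End ChartExtension.

Theorem corollary1p6 (R : realType) (X : pseudoMetricType R) (n : nat) :
  (2 <= n)%N -> compact_manifold R X n -> (exists x : X, True) ->
  ~ omega_FTP X.
Proof.
move=> n2 [X_hausdorff _ charts] [x0 _] FTP.
have [U [phi [psi [oU _ phi_cont psi_cont [psiU psiK phiK]]]]] := charts x0.
pose i0 : 'I_n := Ordinal (ltnW n2); pose i1 : 'I_n := Ordinal n2.
have i01 : i0 != i1 by [].
pose K := [set z : 'rV[R]_n | `|z| <= spiral_bound R i0 i1].
have K_compact : compact K by exact: compact_norm_le.
pose F := chart_extension U phi psi (spiral i0 i1).
pose x := psi (spiral_orbit R i0 i1 0).
have orbitK k : K (iter k (spiral i0 i1) (spiral_orbit R i0 i1 0)).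
  by rewrite /K /= iter_spiral // norm_spiral_orbit.
have F_cont : continuous F.
  apply: (chart_extension_continuous psiU psiK oU phi_cont psi_cont X_hausdorff K_compact).
    exact: spiral_continuous.
  exact: spiral_support.
have F_periodic : totally_periodic F (omega_limit F x).
  move=> y /(omega_limit_chart_extension psiU phiK oU phi_cont psi_cont X_hausdorff
    K_compact orbitK) [w /(omega_limit_spiral_fixed i01) fw ->].
  by exists 1%N; split => //=; rewrite /F chart_extension_psi // fw.
apply: (@infinite_set_injective _ _ (fun m => psi (polar i0 i1 1 (harmonic m)))).
- by move=> a b /(congr1 phi); rewrite !phiK => /(polar_harmonic_inj i01).
- move=> m; have := omega_limit_spiral_circle i01 (@harmonic_ge0 R m).
  exact: (omega_limit_chart_extension_psi psiU phiK psi_cont).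
- exact: FTP F_cont x F_periodic.
Qed.
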